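(* Fix constants $0<A_m<A_M$, $B_i>0$ for $2\le i\le 5$, $C>0$, and an integer $n\ge 2$. Let $T_0<b$ and let $x:[T_0,b]\to\mathbb{R}^2$ be a $C^5$ unit-speed curve with $\sup_t\|x^{(i)}(t)\|\le B_i$ for $2\le i\le 5$. Let $\epsilon>0$ be sufficiently small, let $T=(T_0<T_1<\dots<T_n\le b)$ satisfy $A_m\epsilon<L_j:=T_j-T_{j-1}<A_M\epsilon$ for $1\le j\le n$, let $Y_j=x(T_j)$, and suppose $T$ is admissible. Write $q_j:=(Y_j-Y_{j-1})/L_j=r_j(\cos\omega_j,\sin\omega_j)$ with $r_j>0$, $\omega_j\in\mathbb{R}$. Then there exist $0<\delta_0<\delta_1<1$, depending only on $A_m,A_M,B_2,B_3,B_4,C$ and $\epsilon$, such that $r_j\in[\delta_0,\delta_1]$ for all $1\le j\le n$.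
   Context: For $\epsilon$ sufficiently small $q_j\ne 0$, and one defines $k_j:=\dfrac{\sqrt{12(1-\|q_j\|^2)}}{L_j\|q_j\|}$ for $1\le j\le n$ (Euclidean norm). The sequence $T$ is called admissible when $k_j\ge C$ for all $1\le j\le n$. *)

From Stdlib Require Import Reals.
From Coquelicot Require Import Coquelicot.
Open Scope R_scope.

Definition norm2 (v : R * R) : R := sqrt (fst v ^ 2 + snd v ^ 2).

Definition cx (x : R -> R * R) : R -> R := fun s => fst (x s).
Definition cy (x : R -> R * R) : R -> R := fun s => snd (x s).

Definition Dn (x : R -> R * R) (k : nat) (t : R) : R * R :=
  (Derive_n (cx x) k t, Derive_n (cy x) k t).

Definition C5_on (x : R -> R * R) (a b : R) : Prop :=
  forall t, a <= t <= b ->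
    (forall k, (k < 5)%nat ->
       ex_derive (Derive_n (cx x) k) t /\ ex_derive (Derive_n (cy x) k) t) /\
    continuous (Derive_n (cx x) 5) t /\ continuous (Derive_n (cy x) 5) t.

Definition unit_speed_on (x : R -> R * R) (a b : R) : Prop :=
  forall t, a <= t <= b -> norm2 (Dn x 1 t) = 1.

Definition Lj (T : nat -> R) (j : nat) : R := T j - T (j - 1)%nat.

Definition qj (x : R -> R * R) (T : nat -> R) (j : nat) : R * R :=
  ((fst (x (T j)) - fst (x (T (j - 1)%nat))) / Lj T j,
   (snd (x (T j)) - snd (x (T (j - 1)%nat))) / Lj T j).

(* r_j = ||q_j|| (the modulus in the polar form q_j = r_j (cos w_j, sin w_j)) *)
Definition rj (x : R -> R * R) (T : nat -> R) (j : nat) : R := norm2 (qj x T j).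

Definition kj (x : R -> R * R) (T : nat -> R) (j : nat) : R :=
  sqrt (12 * (1 - norm2 (qj x T j) ^ 2)) / (Lj T j * norm2 (qj x T j)).

Definition admissible (C : R) (x : R -> R * R) (T : nat -> R) (n : nat) : Prop :=
  forall j, (1 <= j <= n)%nat -> kj x T j >= C.

(** Lower bound: on [T_{j-1}, T_j] the velocity stays within O(B2 L_j) of the
    unit tangent u = x'(T_{j-1}), so by the mean value theorem the chord
    velocity q_j has projection at least 1 - 2 B2 L_j on u; for eps small this
    is at least 1/2, hence r_j >= 1/2.  Upper bound: admissibility k_j >= C
    rearranges to 12 (1 - r_j^2) >= (C L_j r_j)^2 >= (C A_m eps / 2)^2, so
    r_j^2 <= 1 - (C A_m eps)^2 / 48. *)

From Stdlib Require Import Reals Lra Lia Psatz.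
From Coquelicot Require Import Coquelicot.
Open Scope R_scope.

Definition chord (x : R -> R * R) (s t : R) : R * R :=
  ((fst (x t) - fst (x s)) / (t - s), (snd (x t) - snd (x s)) / (t - s)).

Lemma qj_chord x T j : qj x T j = chord x (T (j - 1)%nat) (T j).
Proof. reflexivity. Qed.

Definition C2_on (x : R -> R * R) (a b : R) : Prop :=
  forall t, a <= t <= b -> forall k, (k < 2)%nat ->
    ex_derive (Derive_n (cx x) k) t /\ ex_derive (Derive_n (cy x) k) t.

Lemma C5_on_C2_on x a b a' b' : a <= a' -> b' <= b -> C5_on x a b -> C2_on x a' b'.
Proof.
  intros Ha Hb H5 t Ht k Hk.
  apply (proj1 (H5 t ltac:(lra))); lia.
Qed.

Lemma Rabs_fst_le_norm2 v : Rabs (fst v) <= norm2 v.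
Proof. apply Rle_trans with (2 := proj1 (sqrt_plus_sqr _ _)), Rmax_l. Qed.

Lemma Rabs_snd_le_norm2 v : Rabs (snd v) <= norm2 v.
Proof. apply Rle_trans with (2 := proj1 (sqrt_plus_sqr _ _)), Rmax_r. Qed.

Lemma norm2_sq v : norm2 v ^ 2 = fst v ^ 2 + snd v ^ 2.
Proof. apply pow2_sqrt. nra. Qed.

Lemma dot_le_norm2 (u p : R * R) :
  norm2 u = 1 -> fst u * fst p + snd u * snd p <= norm2 p.
Proof.
  intros Hu.
  assert (Hu2 : fst u ^ 2 + snd u ^ 2 = 1) by (rewrite <- norm2_sq, Hu; ring).
  destruct u as [u1 u2], p as [p1 p2]; unfold norm2; cbn [fst snd] in *.
  assert (Lagrange : (u1 * p1 + u2 * p2) ^ 2 + (u1 * p2 - u2 * p1) ^ 2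
                     = (u1 ^ 2 + u2 ^ 2) * (p1 ^ 2 + p2 ^ 2)) by ring.
  apply Rle_trans with (1 := RRle_abs _).
  rewrite <- sqrt_Rsqr_abs. apply sqrt_le_1_alt.
  rewrite Rsqr_pow2, <- (Rmult_1_l (p1 ^ 2 + p2 ^ 2)), <- Hu2, <- Lagrange.
  pose proof (pow2_ge_0 (u1 * p2 - u2 * p1)). lra.
Qed.

Lemma dot_ge_of_close (u v : R * R) e :
  norm2 u = 1 -> Rabs (fst v - fst u) <= e -> Rabs (snd v - snd u) <= e ->
  1 - 2 * e <= fst u * fst v + snd u * snd v.
Proof.
  intros Hu H1 H2.
  assert (Hu2 : fst u ^ 2 + snd u ^ 2 = 1) by (rewrite <- norm2_sq, Hu; ring).
  assert (Hdev : forall a w, Rabs a <= 1 -> Rabs (w - a) <= e -> - e <= a * (w - a)).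
  { intros a w Ha Hw. apply (Rabs_le_between (a * (w - a)) e).
    rewrite Rabs_mult, <- (Rmult_1_l e).
    apply Rmult_le_compat; auto using Rabs_pos. }
  pose proof (Hdev _ _ (Rle_trans _ _ _ (Rabs_fst_le_norm2 u) (Req_le _ _ Hu)) H1).
  pose proof (Hdev _ _ (Rle_trans _ _ _ (Rabs_snd_le_norm2 u) (Req_le _ _ Hu)) H2).
  nra.
Qed.

Lemma MVT_slope (f : R -> R) s t : s < t ->
  (forall y, s <= y <= t -> ex_derive f y) ->
  exists c, s <= c <= t /\ (f t - f s) / (t - s) = Derive f c.
Proof.
  intros Hst Hd.
  destruct (MVT_gen f s t (Derive f)) as [c [Hc E]].
  - intros y Hy. rewrite Rmin_left, Rmax_right in Hy by lra.
    apply Derive_correct, Hd; lra.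
  - intros y Hy. rewrite Rmin_left, Rmax_right in Hy by lra.
    apply continuity_pt_filterlim.
    apply (ex_derive_continuous (K := R_AbsRing) (V := R_NormedModule)), Hd; lra.
  - rewrite Rmin_left, Rmax_right in Hc by lra.
    exists c. split; [lra|]. rewrite E. field. lra.
Qed.

Lemma Rabs_sub_le_of_Derive_bound (f : R -> R) s t B : s <= t ->
  (forall y, s <= y <= t -> ex_derive f y) ->
  (forall y, s <= y <= t -> Rabs (Derive f y) <= B) ->
  Rabs (f t - f s) <= B * (t - s).
Proof.
  intros Hst Hd HB. destruct (Rle_lt_or_eq_dec s t Hst) as [Hlt | <-].
  - destruct (MVT_slope f s t Hlt Hd) as [c [Hc E]].
    replace (f t - f s) with ((f t - f s) / (t - s) * (t - s)) by (field; lra).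
    rewrite E, Rabs_mult, (Rabs_right (t - s)) by lra.
    apply Rmult_le_compat_r; [lra | apply HB; lra].
  - rewrite !Rminus_diag, Rabs_R0. lra.
Qed.

Lemma chord_speed_ge x s t B : s < t -> C2_on x s t ->
  norm2 (Dn x 1 s) = 1 ->
  (forall y, s <= y <= t -> norm2 (Dn x 2 y) <= B) ->
  1 - 2 * B * (t - s) <= norm2 (chord x s t).
Proof.
  intros Hst HC2 Hu HB.
  assert (HB0 : 0 <= B) by (eapply Rle_trans; [apply sqrt_pos | apply (HB s); lra]).
  assert (Hdev : forall f, (forall y, s <= y <= t -> ex_derive (Derive f) y) ->
            (forall y, s <= y <= t -> Rabs (Derive (Derive f) y) <= B) ->
            forall y, s <= y <= t -> Rabs (Derive f y - Derive f s) <= B * (t - s)).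
  { intros f Hd Hf y Hy.
    apply Rle_trans with (B * (y - s)); [| apply Rmult_le_compat_l; lra].
    apply Rabs_sub_le_of_Derive_bound; intros; [lra | apply Hd | apply Hf]; lra. }
  destruct (MVT_slope (cx x) s t Hst) as [z1 [Hz1 E1]].
  { intros y Hy. apply (HC2 y Hy 0%nat); lia. }
  destruct (MVT_slope (cy x) s t Hst) as [z2 [Hz2 E2]].
  { intros y Hy. apply (HC2 y Hy 0%nat); lia. }
  apply Rle_trans with (2 := dot_le_norm2 _ _ Hu).
  rewrite Rmult_assoc.
  apply dot_ge_of_close; [exact Hu | unfold chord; simpl ..].
  - fold (cx x s) (cx x t). rewrite E1. apply Hdev; auto; intros y Hy.
    + apply (HC2 y Hy 1%nat); lia.
    + exact (Rle_trans _ _ _ (Rabs_fst_le_norm2 (Dn x 2 y)) (HB y Hy)).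
  - fold (cy x s) (cy x t). rewrite E2. apply Hdev; auto; intros y Hy.
    + apply (HC2 y Hy 1%nat); lia.
    + exact (Rle_trans _ _ _ (Rabs_snd_le_norm2 (Dn x 2 y)) (HB y Hy)).
Qed.

Lemma pow2_le_of_le_sqrt a K : 0 < a -> a <= sqrt K -> a ^ 2 <= K.
Proof.
  intros Ha HaK. destruct (Rle_or_lt K 0) as [HK | HK].
  - rewrite sqrt_neg_0 in HaK by exact HK. lra.
  - rewrite <- (pow2_sqrt K) by lra. apply pow_incr. lra.
Qed.

Lemma rj_sq_le_of_kj_ge C x T j l : 0 < C -> 0 < Lj T j -> 0 < rj x T j ->
  0 <= l <= Lj T j * rj x T j -> kj x T j >= C ->
  rj x T j ^ 2 <= 1 - (C * l) ^ 2 / 12.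
Proof.
  unfold kj. fold (rj x T j). intros HC HL Hr Hl Hk.
  assert (HLr : 0 < Lj T j * rj x T j) by (apply Rmult_lt_0_compat; assumption).
  assert (Hsq : (C * (Lj T j * rj x T j)) ^ 2 <= 12 * (1 - rj x T j ^ 2)).
  { apply pow2_le_of_le_sqrt; [apply Rmult_lt_0_compat; assumption |].
    apply Rle_div_r; [exact HLr | lra]. }
  assert (Hmono : (C * l) ^ 2 <= (C * (Lj T j * rj x T j)) ^ 2).
  { apply pow_incr. split; [nra | apply Rmult_le_compat_l; lra]. }
  lra.
Qed.

Lemma partition_le (T : nat -> R) n :
  (forall j, (1 <= j <= n)%nat -> T (j - 1)%nat < T j) ->
  forall i k, (i <= k <= n)%nat -> T i <= T k.
Proof.
  intros Hinc i k. induction k as [| k IH]; intros Hk.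
  - replace i with 0%nat by lia. lra.
  - destruct (Nat.eq_dec i (S k)) as [-> | Hne]; [lra |].
    pose proof (Hinc (S k) ltac:(lia)) as Hk1.
    replace (S k - 1)%nat with k in Hk1 by lia.
    specialize (IH ltac:(lia)). lra.
Qed.

Lemma rj_ge_of_curvature_bound B2 n b x T j :
  C5_on x (T 0%nat) b -> unit_speed_on x (T 0%nat) b ->
  (forall t, T 0%nat <= t <= b -> norm2 (Dn x 2 t) <= B2) ->
  (forall j, (1 <= j <= n)%nat -> T (j - 1)%nat < T j) -> T n <= b ->
  (1 <= j <= n)%nat -> 1 - 2 * B2 * Lj T j <= rj x T j.
Proof.
  intros HC5 Hus HB2 Hinc HTn Hj.
  assert (Hs : T 0%nat <= T (j - 1)%nat) by (apply (partition_le T n Hinc); lia).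
  assert (Ht : T j <= T n) by (apply (partition_le T n Hinc); lia).
  pose proof (Hinc j Hj) as Hlt.
  unfold rj, Lj. rewrite qj_chord.
  apply chord_speed_ge.
  - exact Hlt.
  - apply (C5_on_C2_on x (T 0%nat) b); [lra | lra | exact HC5].
  - apply Hus. lra.
  - intros y Hy. apply HB2. lra.
Qed.

Theorem lemma1 (Am AM B2 B3 B4 C : R) :
  0 < Am -> Am < AM -> 0 < B2 -> 0 < B3 -> 0 < B4 -> 0 < C ->
  exists eps0 : R, 0 < eps0 /\
  forall eps : R, 0 < eps < eps0 ->
  exists delta0 delta1 : R, 0 < delta0 /\ delta0 < delta1 /\ delta1 < 1 /\
  forall (B5 : R) (n : nat) (T0 b : R) (x : R -> R * R) (T : nat -> R),
    0 < B5 -> (2 <= n)%nat -> T0 < b ->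
    C5_on x T0 b ->
    unit_speed_on x T0 b ->
    (forall t, T0 <= t <= b -> norm2 (Dn x 2 t) <= B2) ->
    (forall t, T0 <= t <= b -> norm2 (Dn x 3 t) <= B3) ->
    (forall t, T0 <= t <= b -> norm2 (Dn x 4 t) <= B4) ->
    (forall t, T0 <= t <= b -> norm2 (Dn x 5 t) <= B5) ->
    T 0%nat = T0 ->
    (forall j, (1 <= j <= n)%nat -> T (j - 1)%nat < T j) ->
    T n <= b ->
    (forall j, (1 <= j <= n)%nat -> Am * eps < Lj T j < AM * eps) ->
    admissible C x T n ->
    forall j, (1 <= j <= n)%nat -> delta0 <= rj x T j <= delta1.
Proof.
  intros HAm HAM HB2pos _ _ HC.
  exists (1 / (4 * B2 * AM + C * Am)). split; [apply Rdiv_lt_0_compat; nra |].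
  intros eps [Heps Hsmall]. apply Rlt_div_r in Hsmall; [| nra].
  set (c := (C * Am * eps) ^ 2 / 48).
  assert (HCAe : 0 < C * Am * eps < 1).
  { split; [repeat apply Rmult_lt_0_compat; lra |].
    assert (0 < B2 * AM * eps) by (repeat apply Rmult_lt_0_compat; lra). nra. }
  assert (Hc : 0 < c < 1 / 48) by (unfold c; split; nra).
  exists (1 / 2), (sqrt (1 - c)).
  split; [lra |]. split.
  { rewrite <- (sqrt_pow2 (1 / 2)) by lra. apply sqrt_lt_1_alt. lra. }
  split.
  { rewrite <- sqrt_1 at 2. apply sqrt_lt_1_alt. lra. }
  intros B5 n T0 b x T _ _ _ HC5 Hus HB2 _ _ _ HT0 Hinc HTn HL Hadm j Hj.
  subst T0. destruct (HL j Hj) as [HLlo HLhi].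
  assert (HL0 : 0 < Lj T j) by (apply Rlt_trans with (2 := HLlo), Rmult_lt_0_compat; lra).
  assert (Hlo : 1 / 2 <= rj x T j).
  { pose proof (rj_ge_of_curvature_bound B2 n b x T j HC5 Hus HB2 Hinc HTn Hj). nra. }
  split; [exact Hlo |].
  assert (Hr2 : rj x T j ^ 2 <= 1 - c).
  { replace c with ((C * (Am * eps / 2)) ^ 2 / 12) by (unfold c; field).
    apply rj_sq_le_of_kj_ge; [exact HC | exact HL0 | lra | | exact (Hadm j Hj)].
    pose proof (Rmult_le_pos (Lj T j) (rj x T j - 1 / 2) ltac:(lra) ltac:(lra)).
    split; nra. }
  rewrite <- (sqrt_pow2 (rj x T j)) by lra. apply sqrt_le_1_alt. exact Hr2.
Qed.
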